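(* The subgroup of $G$ consisting of those elements that fix $Q\in\Lambda^2H_\Gamma$ is generated by the standard dominated $Q$-transvections and the $Q$-inversions.
   Context: $\Gamma$ is a finite simplicial graph with vertex set $X$, $|X|=2g$, $A_\Gamma$ its right-angled Artin group ($x,y$ commute iff adjacent), $H_\Gamma$ its abelianization, $L=X\cup X^{-1}$, and for $u\in L$, $\bar u\in X$ is its vertex. $\mathrm{lk}(v)$ = neighbours of $v$, $\mathrm{st}(v)=\mathrm{lk}(v)\cup\{v\}$; domination $v\ge w$ iff $\mathrm{lk}(w)\subset\mathrm{st}(v)$, extended to letters via their vertices. Fix a bijection $u\mapsto u^*$ of $L$ with $(u^* )^*=u^{-1}$ and letters $a_1,\dots,a_g\in L$ such that the vertices of $a_1,\dots,a_g,a_1^*,\dots,a_g^*$ are all of $X$; let $Q=\sum\{[a_i]\wedge[a_i^*]: \bar a_i^*\text{ adjacent to }\bar a_i\}\in\Lambda^2H_\Gamma$ (with $\mathrm{Aut}\,H_\Gamma$ acting diagonally), and assume $Q\ne0$. $\mathrm{supp}\,Q\subset X$ is the set of vertices appearing in $Q$. A letter $u\in L$ also denotes its image in $H_\Gamma$ (so $x^{-1}\mapsto -x$). For $a,b\in L$ with $a\ge b$, $\bar a\neq\bar b$, $E_{a,b}\in\mathrm{Aut}\,H_\Gamma$ sends $b\mapsto b+a$ and fixes the images of all $x\in X$ other than $\bar b$; $N_a$ sends $a\mapsto -a$ and fixes images of all $x\in X\setminus\{\bar a\}$. $G\le\mathrm{Aut}\,H_\Gamma$ is generated by $\{E_{a,b}: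 a\in X, b\in\mathrm{supp}\,Q, a\ge b, a\ne b\}\cup\{N_b:b\in\mathrm{supp}\,Q\}$. A standard dominated $Q$-transvection is an element of one of the forms: (1) $E_{a,a^*}$ where $\bar a\in\mathrm{supp}\,Q$ and $a\ge a^*$; (2) $E_{a,b}E_{b^*,a^*}^{-1}$ where $\bar a,\bar b\in\mathrm{supp}\,Q$, $\bar a\neq \bar b$, $\bar{a^*}\ne\bar b$, $a\ge b$ and $b^*\ge a^*$. The $Q$-inversion for $\bar a\in\mathrm{supp}\,Q$ is $N_aN_{a^*}$. *)

From HB Require Import structures.
From mathcomp Require Import all_boot all_order all_algebra.
Set Implicit Arguments. Unset Strict Implicit. Unset Printing Implicit Defensive.
Import Order.TTheory GRing.Theory Num.Theory.
Local Open Scope ring_scope.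

(* Conventions.
   - The vertex set X of Gamma is 'I_n (in the theorem n = 2 * g); the graph
     is a symmetric irreflexive relation adj : rel 'I_n.
   - H_Gamma = Z^X, elements are column vectors 'cV[int]_n; e_x = delta_mx x 0.
   - Aut H_Gamma acts by matrices 'M[int]_n (column j = image of e_j).
   - Lambda^2 H_Gamma is modelled by alternating integer matrices, with
     u /\ v := u v^T - v u^T and the diagonal action M.Q := M Q M^T.
   - A letter is a pair (x, b) : 'I_n * bool, b = true meaning x^{-1}. *)

Definition letter (n : nat) := ('I_n * bool)%type.

Definition bar n (u : letter n) : 'I_n := u.1.
Definition linv n (u : letter n) : letter n := (u.1, ~~ u.2).
Definition sgn n (u : letter n) : int := if u.2 then -1 else 1.

Definition lvec n (u : letter n) : 'cV[int]_n := sgn u *: delta_mx (bar u) 0.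

Definition wedge n (u v : 'cV[int]_n) : 'M[int]_n := u *m v^T - v *m u^T.

Definition act2 n (M Q : 'M[int]_n) : 'M[int]_n := M *m Q *m M^T.

Definition suppQ n (Q : 'M[int]_n) (x : 'I_n) : bool := [exists y, Q x y != 0].

(* domination v >= w  iff  lk(w) \subset st(v) *)
Definition dom n (adj : rel 'I_n) (v w : 'I_n) : bool :=
  [forall x, adj w x ==> (x == v) || adj v x].

(* E_{a,b}: b |-> b + a, fixes all other generators *)
Definition Emx n (a b : letter n) : 'M[int]_n :=
  1%:M + (sgn a * sgn b) *: delta_mx (bar a) (bar b).

Definition Nmx n (x : 'I_n) : 'M[int]_n := 1%:M - 2%:R *: delta_mx x x.

Inductive in_gen n (S : 'M[int]_n -> Prop) : 'M[int]_n -> Prop :=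
| gen_one : in_gen S 1%:M
| gen_base M : S M -> in_gen S M
| gen_mul M N : in_gen S M -> in_gen S N -> in_gen S (M *m N)
| gen_inv M : in_gen S M -> in_gen S (invmx M).

Definition Qform n g (adj : rel 'I_n) (a : 'I_g -> letter n)
    (star : letter n -> letter n) : 'M[int]_n :=
  \sum_(i < g | adj (bar (star (a i))) (bar (a i)))
     wedge (lvec (a i)) (lvec (star (a i))).

Definition G_gens n (adj : rel 'I_n) (Q : 'M[int]_n) (M : 'M[int]_n) : Prop :=
  (exists a b : 'I_n, [/\ suppQ Q b, dom adj a b, a != b &
                        M = Emx (a, false) (b, false)])
  \/ (exists b : 'I_n, suppQ Q b /\ M = Nmx b).

Definition std_transvection n (adj : rel 'I_n) (star : letter n -> letter n)
    (Q : 'M[int]_n) (M : 'M[int]_n) : Prop :=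
  (exists a : letter n,
     [/\ suppQ Q (bar a), dom adj (bar a) (bar (star a)),
         bar a != bar (star a) & M = Emx a (star a)])
  \/ (exists a b : letter n,
     [/\ suppQ Q (bar a), suppQ Q (bar b), bar a != bar b &
          bar (star a) != bar b] /\
     [/\ dom adj (bar a) (bar b), dom adj (bar (star b)) (bar (star a)),
          bar (star b) != bar (star a) &
          M = Emx a b *m invmx (Emx (star b) (star a))]).

Definition Q_inversion n (star : letter n -> letter n) (Q : 'M[int]_n)
    (M : 'M[int]_n) : Prop :=
  exists a : letter n, suppQ Q (bar a) /\ M = Nmx (bar a) *m Nmx (bar (star a)).

(* Let [mate x] be the vertex of the letter [x^*] and [mate_sign x] its sign: [mate]
   is a fixed-point-free involution and [Q] is the alternating matrix with
   [Q x (mate x) = mate_sign x] for [x] in its support ([paired x]).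
   The generators of [G] send [e_y] to [e_y + e_x] with [x >= y], or to [-e_y], for
   [y] in the support; hence a nonzero off-diagonal entry [M x y] of an element of [G]
   forces [x >= y] and [y] in the support, and the same holds for [M^-1].  If [M] also
   fixes [Q], then [M Q = Q M^-T] adds [mate y >= mate x].  So the column of a vertex
   [v] of the support is carried by vertices [x] with [qdom x v]; for [v] minimal in
   this preorder among the vertices whose columns [v], [mate v] are not yet standard,
   a Euclidean algorithm with standard transvections brings column [v] to [e_v] up to
   sign, a Q-inversion fixes the sign, and standard transvections then clear column
   [mate v], all without disturbing the columns already standard.  Induction on the
   number of such pairs gives one inclusion; the other is a direct computation on the
   generators. *)

From HB Require Import structures.
From mathcomp Require Import all_boot all_order all_algebra.
From mathcomp Require Import ring zify.
Import Order.TTheory GRing.Theory Num.Theory.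
Local Open Scope ring_scope.
Set Implicit Arguments. Unset Strict Implicit. Unset Printing Implicit Defensive.

Lemma sumr_neq0 (V : nmodType) (I : finType) (F : I -> V) :
  \sum_i F i != 0 -> exists i, F i != 0.
Proof.
move=> S0; case: (pickP (fun i => F i != 0)) => [i Fi|F0]; first by exists i.
by move: S0; rewrite big1 ?eqxx // => i _; apply/eqP/negbFE/F0.
Qed.

Lemma absz_add_mul_lt (x y : int) : y != 0 -> (absz y <= absz x)%N ->
  exists c : int, (absz (x + c * y)%R < absz x)%N.
Proof. by move=> y0 le_yx; case: (lerP 0 (x * y)) => xy; [exists (-1) | exists 1]; nia. Qed.

(** * Elementary matrices *)

Section ElementaryMatrices.
Variables (R : comUnitRingType) (n : nat).
Implicit Types (x y : 'I_n) (c d : R) (M N : 'M[R]_n).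

Definition elem_mx x y c : 'M[R]_n := 1%:M + c *: delta_mx x y.

Lemma elem_mxE x y c i j :
  elem_mx x y c i j = (i == j)%:R + c * ((i == x) && (j == y))%:R.
Proof. by rewrite !mxE. Qed.

Lemma mul_delta_mx_entry x y M i j : (delta_mx x y *m M) i j = (i == x)%:R * M y j.
Proof.
rewrite mxE (bigD1 y) //= big1 ?addr0; last first.
  by move=> k /negbTE nk; rewrite mxE nk andbF mul0r.
by rewrite mxE eqxx andbT.
Qed.

Lemma mul_elem_mx x y c M i j :
  (elem_mx x y c *m M) i j = M i j + c * (i == x)%:R * M y j.
Proof.
rewrite mulmxDl mul1mx -scalemxAl !mxE.
by have := mul_delta_mx_entry x y M i j; rewrite mxE => ->; rewrite mulrA.
Qed.

Lemma mul_mx_elem_tr x y c M i j :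
  (M *m (elem_mx x y c)^T) i j = M i j + c * M i y * (j == x)%:R.
Proof.
rewrite -[M]trmxK -trmx_mul mxE mul_elem_mx !mxE; congr (_ + _); ring.
Qed.

Lemma elem_mx0 x y : elem_mx x y 0 = 1%:M.
Proof. by rewrite /elem_mx scale0r addr0. Qed.

Lemma elem_mxD x y c d : x != y -> elem_mx x y c *m elem_mx x y d = elem_mx x y (c + d).
Proof.
move=> nxy; apply/matrixP => i j; rewrite mul_elem_mx !elem_mxE.
rewrite [y == x]eq_sym (negbTE nxy) /= mulr0 addr0 [y == j]eq_sym.
by case: (i == x); case: (j == y); rewrite /= ?andbF; ring.
Qed.

Lemma invmx_uniq M N : N *m M = 1%:M -> invmx M = N.
Proof.
move=> NM1; have [_ uM] := mulmx1_unit NM1.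
by rewrite -[invmx M]mul1mx -NM1 -mulmxA mulmxV // mulmx1.
Qed.

Lemma invmxM M N : M \in unitmx -> N \in unitmx ->
  invmx (M *m N) = invmx N *m invmx M.
Proof.
move=> uM uN; apply: invmx_uniq.
by rewrite mulmxA -[invmx N *m _ *m M]mulmxA mulVmx // mulmx1 mulVmx.
Qed.

Lemma invmx_elem x y c : x != y -> invmx (elem_mx x y c) = elem_mx x y (- c).
Proof. by move=> nxy; apply: invmx_uniq; rewrite elem_mxD // addNr elem_mx0. Qed.

Lemma elem_mx_unit x y c : x != y -> elem_mx x y c \in unitmx.
Proof.
move=> nxy; have := elem_mxD c (- c) nxy; rewrite subrr elem_mx0.
by case/mulmx1_unit.
Qed.

Lemma elem_mxC x y x' y' c d : y != x' -> y' != x ->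
  elem_mx x y c *m elem_mx x' y' d = elem_mx x' y' d *m elem_mx x y c.
Proof.
move=> nyx' ny'x; rewrite /elem_mx !mulmxDl !mulmxDr !mul1mx !mulmx1.
rewrite -!scalemxAl -!scalemxAr !mul_delta_mx_0 // !scaler0 !addr0.
by rewrite -!addrA [c *: _ + _]addrC.
Qed.

End ElementaryMatrices.

Section IntegralMatrices.
Variable n : nat.
Implicit Types (x y : 'I_n) (c : int) (A M : 'M[int]_n).

Lemma Emx_elem (u v : letter n) : Emx u v = elem_mx (bar u) (bar v) (sgn u * sgn v).
Proof. by []. Qed.

Lemma mul_Nmx x M i j : (Nmx x *m M) i j = M i j - 2 * (i == x)%:R * M x j.
Proof.
rewrite /Nmx mulmxBl mul1mx -scalemxAl !mxE.
by have := mul_delta_mx_entry x x M i j; rewrite mxE => ->; rewrite mulrA.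
Qed.

Lemma mul_mx_Nmx_tr x M i j : (M *m (Nmx x)^T) i j = M i j - 2 * M i x * (j == x)%:R.
Proof.
rewrite -[M]trmxK -trmx_mul mxE mul_Nmx !mxE; congr (_ - _); ring.
Qed.

Lemma NmxK x : Nmx x *m Nmx x = 1%:M.
Proof.
apply/matrixP => i j; rewrite mul_Nmx /Nmx !mxE eqxx [x == j]eq_sym.
by case: (i == x); case: (j == x); case: (i == j); rewrite /=; ring.
Qed.

Lemma invmx_Nmx x : invmx (Nmx x) = Nmx x.
Proof. exact/invmx_uniq/NmxK. Qed.

Lemma Nmx_unit x : Nmx x \in unitmx.
Proof. by case: (mulmx1_unit (NmxK x)). Qed.

Lemma act2M A B M : act2 (A *m B) M = act2 A (act2 B M).
Proof. by rewrite /act2 trmx_mul !mulmxA. Qed.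

Lemma act2_1 M : act2 1%:M M = M.
Proof. by rewrite /act2 trmx1 mul1mx mulmx1. Qed.

Lemma act2_invmx A M : A \in unitmx -> act2 A M = M -> act2 (invmx A) M = M.
Proof. by move=> uA fixM; rewrite -{1}fixM -act2M mulVmx // act2_1. Qed.

Lemma act2_elem x y c M i j :
  act2 (elem_mx x y c) M i j = M i j + c * (i == x)%:R * M y j
    + c * M i y * (j == x)%:R + c * c * (i == x)%:R * (j == x)%:R * M y y.
Proof. rewrite /act2 mul_mx_elem_tr !mul_elem_mx; ring. Qed.

Lemma act2_Nmx x M i j :
  act2 (Nmx x) M i j = (1 - 2 * (i == x)%:R) * (1 - 2 * (j == x)%:R) * M i j.
Proof.
rewrite /act2 mul_mx_Nmx_tr !mul_Nmx.
case: (i =P x) => [->|/eqP hi]; case: (j =P x) => [->|/eqP hj];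
  rewrite ?eqxx ?(negbTE hi) ?(negbTE hj) /=; ring.
Qed.

Lemma unitmx_col_neq0 M v : M \in unitmx -> exists u, M u v != 0.
Proof.
move=> uM; have := congr1 (fun A : 'M[int]_n => A v v) (mulVmx uM).
rewrite !mxE eqxx /= => e; have : \sum_j invmx M v j * M j v != 0 by rewrite e oner_eq0.
by case/sumr_neq0 => u; rewrite mulf_eq0 negb_or => /andP [_ Muv]; exists u.
Qed.

Lemma unitmx_col_single M u v : M \in unitmx -> (forall k, k != u -> M k v = 0) ->
  M u v = 1 \/ M u v = -1.
Proof.
move=> uM Mv; have := congr1 (fun A : 'M[int]_n => A v v) (mulVmx uM).
rewrite mxE (bigD1 u) //= big1 ?addr0; last by move=> k nk; rewrite Mv // mulr0.
rewrite mxE eqxx /= mulrC => /(congr1 absz); rewrite abszM => /eqP.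
by rewrite muln_eq1 => /andP [/eqP Mu1 _]; lia.
Qed.

Definition fixes_col M (z : 'I_n) := forall i : 'I_n, M i z = (i == z)%:R.

Definition fixes_colb M (z : 'I_n) := [forall i, M i z == (i == z)%:R].

Lemma fixes_colP M z : reflect (fixes_col M z) (fixes_colb M z).
Proof. by apply: (iffP forallP) => Mz i; apply/eqP. Qed.

Lemma fixes_col_invmx M z : M \in unitmx -> fixes_col M z -> fixes_col (invmx M) z.
Proof.
move=> uM Mz i; have := congr1 (fun A : 'M[int]_n => A i z) (mulVmx uM).
rewrite mxE (bigD1 z) //= big1 ?addr0; last by move=> k nk; rewrite Mz (negbTE nk) mulr0.
by rewrite Mz eqxx mulr1 mxE.
Qed.

Lemma fixes_col_elem M x y c z :
  fixes_col M z -> y != z -> fixes_col (elem_mx x y c *m M) z.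
Proof. by move=> Mz nyz i; rewrite mul_elem_mx Mz (Mz y) (negbTE nyz) mulr0 addr0. Qed.

Lemma fixes_col_Nmx M x z : fixes_col M z -> x != z -> fixes_col (Nmx x *m M) z.
Proof. by move=> Mz nxz i; rewrite mul_Nmx Mz (Mz x) (negbTE nxz) mulr0 subr0. Qed.

Lemma in_gen_powz (S : 'M[int]_n -> Prop) (F : int -> 'M[int]_n) :
  (forall c d, F c *m F d = F (c + d)) -> F 0 = 1%:M -> in_gen S (F 1) ->
  forall c, in_gen S (F c).
Proof.
move=> FD F0 S1.
have Fm1 : in_gen S (F (-1)).
  by rewrite -(@invmx_uniq _ _ (F 1) (F (-1))) ?FD ?addNr //; apply: gen_inv.
have FSn (m : nat) : in_gen S (F m%:Z) /\ in_gen S (F (- m%:Z)).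
  elim: m => [|m [Sm SNm]]; first by rewrite oppr0 F0; split; constructor.
  rewrite -addn1 PoszD opprD -!FD.
  by split; apply: gen_mul.
by case=> m; [case: (FSn m) | rewrite NegzE; case: (FSn m.+1)].
Qed.

Lemma in_gen_cancel (S : 'M[int]_n -> Prop) T M :
  T \in unitmx -> in_gen S T -> in_gen S (T *m M) -> in_gen S M.
Proof.
move=> uT ST STM; rewrite -[M]mul1mx -(mulVmx uT) -mulmxA.
by apply: gen_mul => //; apply: gen_inv.
Qed.

End IntegralMatrices.

Lemma dom_trans n (adj : rel 'I_n) : symmetric adj ->
  forall x y z, x != z -> dom adj x y -> dom adj y z -> dom adj x z.
Proof.
move=> adj_sym x y z nxz /forallP dxy /forallP dyz; apply/forallP => w.
apply/implyP => zw; have /orP[/eqP wy|yw] := implyP (dyz w) zw; last first.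
  exact: implyP (dxy w) yw.
subst w; have yz : adj y z by rewrite adj_sym.
have /orP[/eqP zx|xz] := implyP (dxy z) yz; first by rewrite zx eqxx in nxz.
have zx : adj z x by rewrite adj_sym.
have /orP[/eqP ->|yx] := implyP (dyz x) zx; first by rewrite eqxx.
by rewrite adj_sym yx orbT.
Qed.

(** * The pairing of vertices and the form [Q] *)

Lemma letterE n (u : letter n) : u = (bar u, false) \/ u = linv (bar u, false).
Proof. by case: u => x [] /=; [right|left]. Qed.

Lemma sgn_linv n (u : letter n) : sgn (linv u) = - sgn u.
Proof. by case: u => x []; rewrite /sgn /= ?opprK. Qed.

Lemma sgnK n (u : letter n) : sgn u * sgn u = 1.
Proof. by rewrite /sgn; case: u.2; rewrite ?mulrNN mulr1. Qed.

Lemma wedge_lvecE n (u v : letter n) i j :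
  wedge (lvec u) (lvec v) i j = sgn u * sgn v *
    (((i == bar u) && (j == bar v))%:R - ((i == bar v) && (j == bar u))%:R).
Proof.
rewrite /wedge /lvec !mxE !big_ord1 !mxE /= !andbT.
by case: (i == bar u); case: (j == bar v); case: (i == bar v); case: (j == bar u);
  rewrite /=; ring.
Qed.

Section Stabiliser.
Variable g : nat.
Local Notation n := (2 * g)%N.
Variable adj : rel 'I_n.
Hypothesis adj_sym : symmetric adj.
Variable star : letter n -> letter n.
Hypothesis star_bij : bijective star.
Hypothesis star_inv : forall u, star (star u) = linv u.
Variable a : 'I_g -> letter n.
Hypothesis a_cover : forall x : 'I_n,
  exists i : 'I_g, bar (a i) = x \/ bar (star (a i)) = x.
Local Notation Q := (Qform adj a star).
Implicit Types (M N T : 'M[int]_n).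

Definition mate (x : 'I_n) : 'I_n := bar (star (x, false)).
Definition mate_sign (x : 'I_n) : int := sgn (star (x, false)).
Definition paired (x : 'I_n) : bool := adj x (mate x).

Lemma star_linv u : star (linv u) = linv (star u).
Proof. by rewrite -star_inv star_inv. Qed.

Lemma bar_star u : bar (star u) = mate (bar u).
Proof. by case: (letterE u) => ->; rewrite ?star_linv. Qed.

Lemma sgn_star u : sgn (star u) = sgn u * mate_sign (bar u).
Proof.
by case: (letterE u) => ->; rewrite ?star_linv ?sgn_linv /mate_sign /sgn /=;
  rewrite ?mul1r ?mulN1r.
Qed.

Lemma mateK : involutive mate.
Proof.
by move=> x; rewrite -[mate (mate x)]/(mate (bar (star (x, false)))) -bar_star star_inv.
Qed.

Lemma mate_inj : injective mate.
Proof. exact: inv_inj mateK. Qed.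

Lemma eq_mate x y : (x == mate y) = (mate x == y).
Proof. by apply/eqP/eqP => [->|<-]; rewrite mateK. Qed.

Lemma mate_neq x : mate x != x.
Proof.
apply/eqP; rewrite /mate; case E: (star (x, false)) => [y [|]] /= yx; subst y.
- have E' : star (x, true) = star (x, false) by rewrite -E star_inv E.
  by have := bij_inj star_bij E'.
- by have := star_inv (x, false); rewrite !E.
Qed.

Lemma mate_signK x : mate_sign x * mate_sign x = 1.
Proof. exact: sgnK. Qed.

Lemma mate_sign_neq0 x : mate_sign x != 0.
Proof. by apply/eqP => e; move: (mate_signK x); rewrite e mul0r. Qed.

Lemma mate_sign_mate x : mate_sign (mate x) = - mate_sign x.
Proof.
have := sgn_star (star (x, false)); rewrite star_inv sgn_linv bar_star /= => e.
by rewrite -[LHS]mul1r -(mate_signK x) -mulrA -e mulrN mulr1.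
Qed.

Lemma paired_mate x : paired (mate x) = paired x.
Proof. by rewrite /paired mateK adj_sym. Qed.

Definition pair_vertex (kb : 'I_g * bool) : 'I_n :=
  if kb.2 then mate (bar (a kb.1)) else bar (a kb.1).

Lemma pair_vertex_surj x : exists kb, pair_vertex kb = x.
Proof.
have [k [ax|ax]] := a_cover x; first by exists (k, false).
by exists (k, true); rewrite /pair_vertex /= -ax bar_star.
Qed.

(* A surjection between types of the same cardinality [2 * g] is injective. *)
Lemma pair_vertex_inj : injective pair_vertex.
Proof.
suff : {in predT &, injective pair_vertex} by move=> inj x y; apply: inj.
apply/image_injP.
have -> : #|predT : {pred 'I_g * bool}| = n by rewrite card_prod card_ord card_bool mulnC.
rewrite -[X in _ == X](card_ord n); apply/eqP/eq_card => x; rewrite !inE.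
by have [kb <-] := pair_vertex_surj x; apply: image_f.
Qed.

Lemma QformE i j : Q i j = if paired i && (j == mate i) then mate_sign i else 0.
Proof.
rewrite /Qform summxE big_mkcond /=.
have [[k b] <-] := pair_vertex_surj i.
rewrite (bigD1 k) //= big1 ?addr0; last first.
  move=> k' nk; case: ifP => // _; rewrite wedge_lvecE bar_star.
  have neq b' : (pair_vertex (k, b) == pair_vertex (k', b')) = false.
    by apply/negbTE; apply: contra nk => /eqP/pair_vertex_inj [->].
  by rewrite (neq false) (neq true) /= subrr mulr0.
rewrite wedge_lvecE bar_star sgn_star mulrA sgnK mul1r adj_sym -/(paired _).
rewrite /pair_vertex /=; set x := bar (a k); case: b => /=.
- rewrite paired_mate mateK mate_sign_mate eqxx (negbTE (mate_neq _)) /=.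
  by case: (paired x) => //=; case: (j == x) => /=; ring.
- rewrite eqxx [x == _]eq_sym (negbTE (mate_neq _)) /=.
  by case: (paired x) => //=; case: (j == mate x) => /=; ring.
Qed.

Lemma suppQE x : suppQ Q x = paired x.
Proof.
apply/existsP/idP => [[y]|px]; first by rewrite QformE; case: (paired x).
by exists (mate x); rewrite QformE px eqxx /= mate_sign_neq0.
Qed.

(** * The stabiliser and its generators *)

Definition dominated (M : 'M[int]_n) :=
  (forall x y, x != y -> M x y != 0 -> dom adj x y && paired y) /\
  (forall y, ~~ paired y -> M y y = 1).

Definition bidominated (M : 'M[int]_n) :=
  [/\ M \in unitmx, dominated M & dominated (invmx M)].

Lemma dominated1 : dominated 1%:M.
Proof.
split=> [x y nxy|y _]; first by rewrite mxE (negbTE nxy).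
by rewrite mxE eqxx.
Qed.

Lemma dominatedM M N : dominated M -> dominated N -> dominated (M *m N).
Proof.
move=> [domM diagM] [domN diagN]; split.
  move=> x y nxy; rewrite mxE => /sumr_neq0 [k].
  rewrite mulf_eq0 negb_or => /andP [Mxk Nky].
  have [xk|nxk] := eqVneq x k; first by move: Nky; rewrite -xk; apply: domN.
  have [eky|nky] := eqVneq k y; first by move: Mxk; rewrite eky; apply: domM.
  case/andP: (domM _ _ nxk Mxk) => dxk _; case/andP: (domN _ _ nky Nky) => dky ->.
  by rewrite andbT (dom_trans adj_sym nxy dxk dky).
move=> y py; rewrite mxE (bigD1 y) //= big1 ?addr0 ?diagM ?diagN ?mulr1 //.
move=> k nky; have [->|Nky] := eqVneq (N k y) 0; first by rewrite mulr0.
by case/andP: (domN _ _ nky Nky) => _ pky; rewrite pky in py.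
Qed.

Lemma dominated_elem x y c : x != y -> dom adj x y -> paired y ->
  dominated (elem_mx x y c).
Proof.
move=> nxy dxy py; split=> [i j nij|j pj]; rewrite elem_mxE.
  rewrite (negbTE nij) add0r.
  by case: (i =P x) => [->|_]; case: (j =P y) => [->|_]; rewrite /= ?mulr0 ?eqxx ?dxy.
rewrite eqxx; have [jy|_] := eqVneq j y; first by rewrite jy py in pj.
by rewrite andbF mulr0 addr0.
Qed.

Lemma dominated_Nmx x : paired x -> dominated (Nmx x).
Proof.
move=> px; split=> [i j nij|j pj]; rewrite /Nmx !mxE ?eqxx.
  rewrite (negbTE nij); case: (i =P x) => [<-|_]; rewrite ?[j == i]eq_sym ?(negbTE nij);
  by rewrite /= ?andbF.
by case: (j =P x) => [jx|_] /=; [rewrite jx px in pj | rewrite mulr0 subr0].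
Qed.

Lemma bidominated1 : bidominated 1%:M.
Proof. by split; rewrite ?unitmx1 ?invmx1 //; apply: dominated1. Qed.

Lemma bidominatedM M N : bidominated M -> bidominated N -> bidominated (M *m N).
Proof.
move=> [uM dM dM'] [uN dN dN']; split; first by rewrite unitmx_mul uM.
  exact: dominatedM.
by rewrite invmxM //; apply: dominatedM.
Qed.

Lemma bidominatedV M : bidominated M -> bidominated (invmx M).
Proof. by move=> [uM dM dM']; split; rewrite ?unitmx_inv ?invmxK. Qed.

Lemma bidominated_gen M : in_gen (G_gens adj Q) M -> bidominated M.
Proof.
elim=> [|{}M GM|M1 M2 _ h1 _ h2|{}M _ h]; last exact: bidominatedV.
- exact: bidominated1.
- case: GM => [[x [y [py dxy nxy ->]]]|[x [px ->]]].
    rewrite suppQE in py; split; [exact: elem_mx_unit | exact: dominated_elem |].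
    by rewrite invmx_elem //; apply: dominated_elem.
  rewrite suppQE in px.
  by split; rewrite ?Nmx_unit ?invmx_Nmx //; apply: dominated_Nmx.
- exact: bidominatedM.
Qed.

Definition stab (M : 'M[int]_n) := in_gen (G_gens adj Q) M /\ act2 M Q = Q.
Definition qgen (M : 'M[int]_n) :=
  in_gen (fun N => std_transvection adj star Q N \/ Q_inversion star Q N) M.

Lemma stab1 : stab 1%:M.
Proof. by split; [constructor | rewrite act2_1]. Qed.

Lemma stab_unit M : stab M -> M \in unitmx.
Proof. by case=> /bidominated_gen []. Qed.

Lemma stabM M N : stab M -> stab N -> stab (M *m N).
Proof. by move=> [GM QM] [GN QN]; split; [apply: gen_mul | rewrite act2M QN QM]. Qed.

Lemma stabV M : stab M -> stab (invmx M).
Proof.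
move=> sM; split; first by apply: gen_inv; case: sM.
by apply: act2_invmx; [apply: stab_unit | case: sM].
Qed.

Lemma act2_elem_Qform p q c i j : paired q ->
  act2 (elem_mx p q c) Q i j = Q i j + c * mate_sign q *
    (((i == p) && (j == mate q))%:R - ((i == mate q) && (j == p))%:R).
Proof.
move=> pq; rewrite act2_elem !QformE pq [q == mate q]eq_sym (negbTE (mate_neq q)).
rewrite andbF mulr0 addr0 [q == mate i]eq_mate.
case: (i =P mate q) => [->|/eqP niq].
  rewrite paired_mate pq mate_sign_mate mateK eqxx /=.
  by case: (mate q == p); case: (j == p); case: (j == mate q); rewrite /=; ring.
rewrite [mate q == i]eq_sym (negbTE niq) andbF /=.
by case: (i == p); case: (j == p); case: (j == mate q); rewrite /=; ring.
Qed.

Lemma act2_elem_mate x c : paired x -> act2 (elem_mx x (mate x) c) Q = Q.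
Proof.
move=> px; apply/matrixP => i j.
by rewrite act2_elem_Qform ?paired_mate // mateK subrr mulr0 addr0.
Qed.

Definition pair_transv x y c : 'M[int]_n :=
  elem_mx x y c *m elem_mx (mate y) (mate x) (- (c * mate_sign x * mate_sign y)).

Lemma pair_transv0 x y : pair_transv x y 0 = 1%:M.
Proof. by rewrite /pair_transv !mul0r oppr0 !elem_mx0 mulmx1. Qed.

Lemma pair_transvD x y c d : x != y ->
  pair_transv x y c *m pair_transv x y d = pair_transv x y (c + d).
Proof.
move=> nxy; rewrite /pair_transv.
set e := fun c => - (c * mate_sign x * mate_sign y).
have nxy' : mate y != mate x by rewrite (inj_eq mate_inj) eq_sym.
have comm : elem_mx (mate y) (mate x) (e c) *m elem_mx x y d =
            elem_mx x y d *m elem_mx (mate y) (mate x) (e c).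
  by apply: elem_mxC; rewrite ?mate_neq // eq_sym mate_neq.
rewrite -mulmxA (mulmxA (elem_mx (mate y) _ _)) comm !mulmxA elem_mxD //.
by rewrite -mulmxA elem_mxD // /e; congr (_ *m elem_mx _ _ _); ring.
Qed.

(* The second factor of [pair_transv x y c] acts on [Q] as the inverse of the first. *)
Lemma act2_elem_mate_pair x y c : paired x -> paired y ->
  act2 (elem_mx (mate y) (mate x) (- (c * mate_sign x * mate_sign y))) Q =
  act2 (elem_mx x y (- c)) Q.
Proof.
move=> px py; apply/matrixP => i j.
rewrite !act2_elem_Qform ?paired_mate // mateK mate_sign_mate.
have -> : - (c * mate_sign x * mate_sign y) * - mate_sign x = c * mate_sign y.
  by rewrite mulrNN mulrAC -(mulrA c) mate_signK mulr1.
by ring.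
Qed.

Lemma act2_pair_transv x y c : paired x -> paired y -> x != y ->
  act2 (pair_transv x y c) Q = Q.
Proof.
move=> px py nxy; rewrite /pair_transv act2M act2_elem_mate_pair //.
by rewrite -act2M elem_mxD // subrr elem_mx0 act2_1.
Qed.

Lemma act2_Nmx_pair x : act2 (Nmx x *m Nmx (mate x)) Q = Q.
Proof.
apply/matrixP => i j; rewrite act2M !act2_Nmx QformE.
case: (paired i) => /=; last by rewrite !mulr0.
case: (j =P mate i) => [->|_]; last by rewrite !mulr0.
rewrite -eq_mate (inj_eq mate_inj).
by case: (i == x); case: (i == mate x); rewrite /=; ring.
Qed.

Lemma in_gen_elem x y c : paired y -> dom adj x y -> x != y ->
  in_gen (G_gens adj Q) (elem_mx x y c).
Proof.
move=> py dxy nxy; apply: (in_gen_powz (F := elem_mx x y)) => //.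
- by move=> ??; apply: elem_mxD.
- exact: elem_mx0.
by apply: gen_base; left; exists x, y; rewrite suppQE.
Qed.

Lemma stab_elem_mate x c : paired x -> dom adj x (mate x) -> stab (elem_mx x (mate x) c).
Proof.
move=> px dx; split; last exact: act2_elem_mate.
by apply: in_gen_elem; rewrite ?paired_mate // eq_sym mate_neq.
Qed.

Lemma stab_pair_transv x y c : paired x -> paired y -> x != y ->
  dom adj x y -> dom adj (mate y) (mate x) -> stab (pair_transv x y c).
Proof.
move=> px py nxy dxy dyx; split; last exact: act2_pair_transv.
apply: gen_mul; apply: in_gen_elem; rewrite ?paired_mate //.
by rewrite (inj_eq mate_inj) eq_sym.
Qed.

Lemma stab_Nmx_pair x : paired x -> stab (Nmx x *m Nmx (mate x)).
Proof.
move=> px; split; last exact: act2_Nmx_pair.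
by apply: gen_mul; apply: gen_base; right; [exists x | exists (mate x)];
  rewrite suppQE ?paired_mate.
Qed.

Lemma qgen_elem_mate x c : paired x -> dom adj x (mate x) -> qgen (elem_mx x (mate x) c).
Proof.
move=> px dx; rewrite -[c]mulr1 -(mate_signK x) mulrA.
apply: (in_gen_powz (F := fun c => elem_mx x (mate x) (c * mate_sign x))).
- by move=> c1 d; rewrite elem_mxD ?mulrDl // eq_sym mate_neq.
- by rewrite mul0r elem_mx0.
apply: gen_base; left; left; exists (x, false).
by rewrite suppQE bar_star eq_sym mate_neq.
Qed.

Lemma qgen_pair_transv x y c : paired x -> paired y -> x != y -> mate x != y ->
  dom adj x y -> dom adj (mate y) (mate x) -> qgen (pair_transv x y c).
Proof.
move=> px py nxy nxy' dxy dyx.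
apply: (in_gen_powz (F := pair_transv x y)).
- by move=> ??; apply: pair_transvD.
- exact: pair_transv0.
apply: gen_base; left; right; exists (x, false), (y, false).
rewrite !bar_star !suppQE (inj_eq mate_inj) [y == x]eq_sym; do 2!split=> //.
rewrite invmx_elem ?bar_star; last by rewrite (inj_eq mate_inj) eq_sym.
by rewrite /pair_transv !sgn_star /sgn /=; congr (_ *m elem_mx _ _ _); ring.
Qed.

Lemma qgen_Nmx_pair x : paired x -> qgen (Nmx x *m Nmx (mate x)).
Proof.
by move=> px; apply: gen_base; right; exists (x, false); rewrite suppQE bar_star.
Qed.

Lemma qgen_sub_stab M : qgen M -> stab M.
Proof.
elim=> [|{}M QM|M1 M2 _ h1 _ h2|{}M _ h]; [exact: stab1| |exact: stabM|exact: stabV].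
case: QM => [[[u [pu du nu ->]]|[u [v [[pu pv nuv nuv'] [duv dvu nvu ->]]]]]|[u [pu ->]]].
- rewrite Emx_elem !bar_star; apply: stab_elem_mate; rewrite -?suppQE //.
  by rewrite -bar_star.
- rewrite !Emx_elem invmx_elem // !bar_star.
  have -> : - (sgn (star v) * sgn (star u)) =
            - ((sgn u * sgn v) * mate_sign (bar u) * mate_sign (bar v)).
    by rewrite !sgn_star; ring.
  rewrite !bar_star in dvu nvu.
  by apply: stab_pair_transv; rewrite -?suppQE.
- by rewrite bar_star; apply: stab_Nmx_pair; rewrite -suppQE.
Qed.

(* [M Q M^T = Q] is read as [M Q = Q (M^-1)^T]: column [mate z] of [M] determines row
   [z] of [M^-1]. *)
Lemma stab_entry M x z : stab M ->
  (if paired z then M x (mate z) * mate_sign (mate z) else 0) =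
  (if paired x then mate_sign x * invmx M z (mate x) else 0).
Proof.
move=> sM; have uM := stab_unit sM; case: sM => _ QM.
have MQ : M *m Q = Q *m (invmx M)^T.
  by rewrite -{2}QM /act2 -!mulmxA -trmx_mul mulVmx // trmx1 mulmx1.
have MQ_xz : (M *m Q) x z = if paired z then M x (mate z) * mate_sign (mate z) else 0.
  rewrite mxE (bigD1 (mate z)) //= big1 ?addr0 => [|k nk]; last first.
    by rewrite QformE eq_mate eq_sym (negbTE nk) andbF mulr0.
  by rewrite QformE paired_mate mateK eqxx andbT; case: (paired z); rewrite ?mulr0.
have QM_xz : (Q *m (invmx M)^T) x z =
             if paired x then mate_sign x * invmx M z (mate x) else 0.
  rewrite mxE (bigD1 (mate x)) //= big1 ?addr0 => [|k nk]; last first.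
    by rewrite QformE (negbTE nk) andbF mul0r.
  by rewrite QformE eqxx andbT mxE; case: (paired x); rewrite ?mul0r.
by rewrite -MQ_xz -QM_xz MQ.
Qed.

Lemma stab_unpaired_col M y : stab M -> ~~ paired y -> fixes_col M y.
Proof.
case=> /bidominated_gen [_ [domM diagM] _] _ py i.
have [->|niy] := eqVneq i y; first by rewrite diagM // eqxx.
apply/eqP; apply: contraNT py => Miy.
by case/andP: (domM _ _ niy Miy).
Qed.

Lemma stab_offdiag M x y : stab M -> x != y -> M x y != 0 ->
  [/\ paired x, paired y, dom adj x y & dom adj (mate y) (mate x)].
Proof.
move=> sM nxy Mxy; have [_ [domM _] [domM' _]] := bidominated_gen sM.1.
case/andP: (domM _ _ nxy Mxy) => dxy py.
have := stab_entry x (mate y) sM; rewrite paired_mate py mateK.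
case: ifP => px; last first.
  by move/eqP; rewrite mulf_eq0 (negbTE Mxy) (negbTE (mate_sign_neq0 _)).
move=> e; have M'yx : invmx M (mate y) (mate x) != 0.
  apply: contraNneq (mulf_neq0 Mxy (mate_sign_neq0 y)) => M'0.
  by rewrite e M'0 mulr0.
have nyx : mate y != mate x by rewrite (inj_eq mate_inj) eq_sym.
by case/andP: (domM' _ _ nyx M'yx).
Qed.

Lemma stab_row_fixed M y j : stab M -> fixes_col M (mate y) -> j != y -> M y j = 0.
Proof.
move=> sM My nj; case pj: (paired j); last first.
  by rewrite (stab_unpaired_col sM (negbT pj)) eq_sym (negbTE nj).
have := stab_entry y (mate j) sM; rewrite paired_mate pj mateK.
rewrite (fixes_col_invmx (stab_unit sM) My) (inj_eq mate_inj) (negbTE nj) mulr0 if_same.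
by move/eqP; rewrite mulf_eq0 (negbTE (mate_sign_neq0 _)) orbF => /eqP.
Qed.

Lemma stab_mate_diag M v : stab M -> paired v -> fixes_col M v -> M (mate v) (mate v) = 1.
Proof.
move=> sM pv Mv; have := stab_entry (mate v) v sM; rewrite pv paired_mate pv mateK.
rewrite (fixes_col_invmx (stab_unit sM) Mv) eqxx mulr1 mulrC => e.
by apply: (mulIf (mate_sign_neq0 (mate v))); rewrite mulrC e mul1r.
Qed.

(** * Reduction of a stabiliser element to the identity *)

Lemma qgen_cancel T M : qgen T -> qgen (T *m M) -> qgen M.
Proof. by move=> QT; apply: in_gen_cancel (stab_unit (qgen_sub_stab QT)) QT. Qed.

Definition qgen_on (P : 'M[int]_n -> Prop) := forall M, P M -> qgen M.

Definition qdom x y := (x == y) || (dom adj x y && dom adj (mate y) (mate x)).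

Lemma qdom_refl x : qdom x x.
Proof. by rewrite /qdom eqxx. Qed.

Lemma qdomP x y : x != y -> qdom x y -> dom adj x y && dom adj (mate y) (mate x).
Proof. by rewrite /qdom => /negbTE ->. Qed.

Lemma qdom_trans x y z : qdom x y -> qdom y z -> qdom x z.
Proof.
rewrite /qdom; have [->|nxy] //= := eqVneq x y; case/andP=> dxy dyx.
have [<-|nyz] /= := eqVneq y z; first by rewrite dxy dyx orbT.
case/andP=> dyz dzy; have [//|nxz] /= := eqVneq x z.
rewrite (dom_trans adj_sym nxz dxy dyz) (dom_trans adj_sym _ dzy dyx) //.
by rewrite (inj_eq mate_inj) eq_sym.
Qed.

Section ReducePair.
Variable fixed : pred 'I_n.
Hypothesis fixed_mate : forall z, fixed (mate z) = fixed z.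
Variable v : 'I_n.
Hypothesis pv : paired v.
Hypothesis unfixed_v : ~~ fixed v.
Hypothesis v_min : forall x, paired x -> ~~ fixed x -> qdom x v -> qdom v x.

Definition stab_fixing M := stab M /\ forall z, fixed z -> fixes_col M z.

Definition in_class x := [&& paired x, ~~ fixed x, qdom x v & qdom v x].

Definition class_col M := stab_fixing M /\ forall x, M x v != 0 -> in_class x.

Lemma in_class_v : in_class v.
Proof. by rewrite /in_class pv unfixed_v qdom_refl. Qed.

Lemma unfixed_ne x z : ~~ fixed x -> fixed z -> x != z.
Proof. by move=> ux fz; apply: contraNneq ux => ->. Qed.

Lemma stab_fixing_mul T M : stab T -> stab_fixing M ->
  (forall z, fixed z -> fixes_col M z -> fixes_col (T *m M) z) -> stab_fixing (T *m M).
Proof. by move=> sT [sM fM] TM; split=> [|z fz]; [apply: stabM | apply/TM/fM]. Qed.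

Lemma stab_fixing_class_col M : stab_fixing M -> class_col M.
Proof.
move=> [sM fM]; split=> // x Mxv; have [->|nxv] := eqVneq x v; first exact: in_class_v.
have [px _ dxv dvx] := stab_offdiag sM nxv Mxv.
have ux : ~~ fixed x.
  apply: contraNN Mxv => fx; apply/eqP/(stab_row_fixed sM); last by rewrite eq_sym.
  by apply: fM; rewrite fixed_mate.
have qxv : qdom x v by rewrite /qdom dxv dvx orbT.
by rewrite /in_class px ux qxv v_min.
Qed.

Lemma class_col_add M s t c : class_col M -> in_class s -> in_class t -> s != t ->
  (t == mate s) || (M (mate s) v == 0) ->
  exists2 T, qgen T & class_col (T *m M) /\
    forall i, (T *m M) i v = M i v + c * (i == s)%:R * M t v.
Proof.
move=> [fM clM] Cs Ct nst st_ok.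
have /and4P[ps us qsv _] := Cs; have /and4P[pt ut _ qvt] := Ct.
have /andP[dst dts] := qdomP nst (qdom_trans qsv qvt).
have ums : ~~ fixed (mate s) by rewrite fixed_mate.
suff [T QT [fTM colTM]] : exists2 T, qgen T & stab_fixing (T *m M) /\
    forall i, (T *m M) i v = M i v + c * (i == s)%:R * M t v.
  exists T => //; split=> //; split=> // x; rewrite colTM.
  by case: (x =P s) => [-> //|_] /=; rewrite mulr0 mul0r addr0; apply: clM.
have [ts|nts] := eqVneq t (mate s).
  rewrite ts in dst; exists (elem_mx s (mate s) c); first exact: qgen_elem_mate.
  split=> [|i]; last by rewrite mul_elem_mx ts.
  apply: stab_fixing_mul (stab_elem_mate c ps dst) fM _ => z fz Mz.
  exact: fixes_col_elem Mz (unfixed_ne ums fz).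
have Mms : M (mate s) v = 0 by apply/eqP; move: st_ok; rewrite (negbTE nts).
exists (pair_transv s t c); first by apply: qgen_pair_transv; rewrite // eq_sym.
split=> [|i]; last by rewrite /pair_transv -mulmxA !mul_elem_mx Mms !mulr0 !addr0.
apply: stab_fixing_mul (stab_pair_transv c ps pt nst dst dts) fM _ => z fz Mz.
rewrite /pair_transv -mulmxA; apply: fixes_col_elem; last exact: unfixed_ne ut fz.
exact: fixes_col_elem Mz (unfixed_ne ums fz).
Qed.

Definition col_weight M := (\sum_x absz (M x v))%N.

Lemma col_weight_lt M M' s : (forall i, i != s -> M' i v = M i v) ->
  (absz (M' s v) < absz (M s v))%N -> (col_weight M' < col_weight M)%N.
Proof.
move=> M'M lt_s; rewrite /col_weight (bigD1 s) //= [X in (_ < X)%N](bigD1 s) //=.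
by rewrite (eq_bigr (fun i => absz (M i v))) ?ltn_add2r // => i /M'M ->.
Qed.

(* One step of the Euclidean algorithm on column [v].  When [x] and [mate x] both
   occur, the pair [s, t] is taken inside [{x, mate x}], as [class_col_add] requires. *)
Lemma class_col_euclid M s0 t0 : class_col M -> s0 != t0 -> M s0 v != 0 -> M t0 v != 0 ->
  exists2 T, qgen T & class_col (T *m M) /\ (col_weight (T *m M) < col_weight M)%N.
Proof.
move=> cM ns0t0 Ms0 Mt0.
have [s [t [nst Ms Mt st_ok le_ts]]] : exists s t, [/\ s != t, M s v != 0, M t v != 0,
    (t == mate s) || (M (mate s) v == 0) & (absz (M t v) <= absz (M s v))%N].
  case: (pickP (fun x => (M x v != 0) && (M (mate x) v != 0))) => [x /andP[Mx Mmx]|none].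
    have [le|lt] := leqP (absz (M (mate x) v)) (absz (M x v)).
      by exists x, (mate x); rewrite eqxx eq_sym mate_neq.
    by exists (mate x), x; rewrite mateK eqxx mate_neq (ltnW lt).
  have mate0 x : M x v != 0 -> M (mate x) v == 0.
    by move=> Mx; move: (none x); rewrite Mx => /negbFE.
  have [le|lt] := leqP (absz (M t0 v)) (absz (M s0 v)).
    by exists s0, t0; rewrite ns0t0 Ms0 Mt0 mate0 ?orbT.
  by exists t0, s0; rewrite eq_sym ns0t0 Ms0 Mt0 mate0 ?orbT // (ltnW lt).
have [c lt_c] := absz_add_mul_lt Mt le_ts.
have [T QT [cTM colTM]] := class_col_add c cM (cM.2 _ Ms) (cM.2 _ Mt) nst st_ok.
exists T => //; split=> //; apply: (col_weight_lt (s := s)).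
  by move=> i nis; rewrite colTM (negbTE nis) mulr0 mul0r addr0.
by rewrite colTM eqxx mulr1.
Qed.

Lemma qgen_on_class_col :
  qgen_on (fun M => class_col M /\ exists u, forall k, k != u -> M k v = 0) ->
  qgen_on class_col.
Proof.
move=> single M; move: {2}(col_weight M).+1 (ltnSn (col_weight M)) => w.
elim: w M => // w IHw M lt_w cM.
case: (pickP (fun st : 'I_n * 'I_n => [&& st.1 != st.2, M st.1 v != 0 & M st.2 v != 0]))
  => [[s t] /and3P[nst Ms Mt] | none]; last first.
  have [u Mu] := unitmx_col_neq0 v (stab_unit cM.1.1).
  apply: single; split=> //; exists u => k nku; apply/eqP.
  by move: (none (k, u)); rewrite /= nku Mu andbT => /negbFE.
have [T QT [cTM lt_TM]] := class_col_euclid cM nst Ms Mt.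
by apply: (qgen_cancel QT); apply: IHw cTM; apply: leq_trans lt_TM _.
Qed.

Lemma qgen_on_col_at_v :
  qgen_on (fun M => stab_fixing M /\ fixes_col M v) ->
  forall M, stab_fixing M -> (forall k, k != v -> M k v = 0) -> qgen M.
Proof.
move=> fixv M fM Mv; have Mmv : M (mate v) v = 0 by rewrite Mv ?mate_neq.
have [Mvv|Mvv] := unitmx_col_single (stab_unit fM.1) Mv.
  apply: fixv; split=> // i.
  by have [->|niv] := eqVneq i v; [rewrite Mvv | rewrite Mv].
have NN := qgen_Nmx_pair pv; apply: (qgen_cancel NN); apply: fixv; split.
  apply: stab_fixing_mul (qgen_sub_stab NN) fM _ => z fz Mz; rewrite -mulmxA.
  have umv : ~~ fixed (mate v) by rewrite fixed_mate.
  apply: fixes_col_Nmx; last exact: unfixed_ne unfixed_v fz.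
  by apply: fixes_col_Nmx; last exact: unfixed_ne umv fz.
move=> i; rewrite -mulmxA !mul_Nmx Mmv Mvv !mulr0 !subr0.
by have [->|niv] := eqVneq i v; rewrite ?Mvv ?Mv /=; lia.
Qed.

Lemma qgen_on_single_col :
  qgen_on (fun M => stab_fixing M /\ fixes_col M v) ->
  qgen_on (fun M => class_col M /\ exists u, forall k, k != u -> M k v = 0).
Proof.
move=> fixv M [cM [u Mu]].
have [uv|nuv] := eqVneq u v; first by subst u; exact: (qgen_on_col_at_v fixv cM.1).
have [Mu0|Muv] := eqVneq (M u v) 0.
  apply: (qgen_on_col_at_v fixv cM.1 _) => k _.
  by have [->|] := eqVneq k u; last exact: Mu.
have Cu := cM.2 _ Muv.
have ok1 : (u == mate v) || (M (mate v) v == 0).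
  by case: (u =P mate v) => [//|/eqP nu]; rewrite Mu // eq_sym.
have nvu : v != u by rewrite eq_sym.
have [T1 Q1 [cT1 col1]] := class_col_add 1 cM in_class_v Cu nvu ok1.
have ok2 : (v == mate u) || ((T1 *m M) (mate u) v == 0).
  case: (v =P mate u) => [//|/eqP nv] /=.
  by rewrite col1 (Mu (mate u)) ?mate_neq // [mate u == v]eq_sym (negbTE nv) mulr0 mul0r.
have [T2 Q2 [cT2 col2]] := class_col_add (-1) cT1 Cu in_class_v nuv ok2.
apply: (qgen_cancel Q1); apply: (qgen_cancel Q2).
apply: (qgen_on_col_at_v fixv cT2.1 _) => k nkv.
rewrite col2 !col1 eqxx mulr1 (Mu v) // add0r.
case: (k =P u) => [->|/eqP nku]; first by rewrite (negbTE nuv) /=; ring.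
by rewrite (negbTE nkv) Mu //=; ring.
Qed.

Definition mate_col_support M :=
  #|[set x | [&& x != v, x != mate v & M x (mate v) != 0]]|.

Lemma mate_col_step M x : stab_fixing M -> fixes_col M v ->
  x != v -> x != mate v -> M x (mate v) != 0 ->
  exists2 T, qgen T & [/\ stab_fixing (T *m M), fixes_col (T *m M) v &
    (mate_col_support (T *m M) < mate_col_support M)%N].
Proof.
move=> fM Mv nxv nxmv Mx.
have [px pmv dx dmx] := stab_offdiag fM.1 nxmv Mx.
have ux : ~~ fixed x.
  apply: contraNN Mx => fx; apply/eqP/(stab_row_fixed fM.1); last by rewrite eq_sym.
  by apply: fM.2; rewrite fixed_mate.
have umx : ~~ fixed (mate x) by rewrite fixed_mate.
have umv : ~~ fixed (mate v) by rewrite fixed_mate.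
have Mmm := stab_mate_diag fM.1 pv Mv.
set c := - M x (mate v).
have nmx_mv : mate x != v by rewrite -eq_mate.
exists (pair_transv x (mate v) c).
  by apply: qgen_pair_transv; rewrite // (inj_eq mate_inj).
have col i : (pair_transv x (mate v) c *m M) i (mate v) =
    M i (mate v) - c * mate_sign x * mate_sign (mate v) * (i == v)%:R * M (mate x) (mate v)
    + c * (i == x)%:R.
  rewrite /pair_transv -mulmxA !mul_elem_mx mateK Mmm (negbTE (mate_neq v)).
  by rewrite mulr0 mul0r addr0 mulr1; ring.
split.
- apply: stab_fixing_mul (stab_pair_transv c px pmv nxmv dx dmx) fM _ => z fz Mz.
  rewrite /pair_transv -mulmxA mateK; apply: fixes_col_elem; last exact: unfixed_ne fz.
  by apply: fixes_col_elem; last exact: unfixed_ne fz.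
- rewrite /pair_transv -mulmxA mateK.
  exact: fixes_col_elem (fixes_col_elem _ _ Mv nmx_mv) (mate_neq v).
rewrite /mate_col_support.
set A := [set y | [&& y != v, y != mate v & M y (mate v) != 0]].
have xA : x \in A by rewrite inE nxv nxmv Mx.
rewrite (cardsD1 x A) xA add1n ltnS subset_leq_card //.
apply/subsetP => y; rewrite !inE col => /and3P[nyv nymv].
rewrite (negbTE nyv) mulr0 mul0r subr0.
have [->|nyx] := eqVneq y x; first by rewrite mulr1 /c addrN eqxx.
by rewrite mulr0 addr0 nymv.
Qed.

Lemma qgen_on_fixed_v :
  qgen_on (fun M => [/\ stab_fixing M, fixes_col M v & fixes_col M (mate v)]) ->
  qgen_on (fun M => stab_fixing M /\ fixes_col M v).
Proof.
move=> fixmv M; move: {2}(mate_col_support M).+1 (ltnSn (mate_col_support M)) => w.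
elim: w M => // w IHw M lt_w [fM Mv].
case: (pickP (fun x => [&& x != v, x != mate v & M x (mate v) != 0]))
  => [x /and3P[nxv nxmv Mx]|none].
  have [T QT [fTM TMv lt_TM]] := mate_col_step fM Mv nxv nxmv Mx.
  by apply: (qgen_cancel QT); apply: IHw => //; apply: leq_trans lt_TM _.
have Mrest i : i != v -> i != mate v -> M i (mate v) = 0.
  by move=> niv nimv; apply/eqP; move: (none i); rewrite niv nimv => /negbFE.
have Mmm := stab_mate_diag fM.1 pv Mv.
have nvmv : v != mate v by rewrite eq_sym mate_neq.
have col_mv c i : (elem_mx v (mate v) c *m M) i (mate v) =
    ((i == v)%:R * (M v (mate v) + c)) + (i == mate v)%:R.
  rewrite mul_elem_mx Mmm mulr1.
  have [->|niv] := eqVneq i v; first by rewrite (negbTE nvmv) /=; lia.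
  have [->|nimv] := eqVneq i (mate v); last rewrite (Mrest i niv nimv).
    by rewrite Mmm /=; lia.
  by rewrite /=; lia.
have [Mv0|Mvmv] := eqVneq (M v (mate v)) 0.
  apply: fixmv; split=> // i; have := col_mv 0 i; rewrite elem_mx0 mul1mx Mv0 addr0.
  by have [->|_] := eqVneq i v; rewrite ?(negbTE nvmv) /=; lia.
have [_ _ dvmv _] := stab_offdiag fM.1 nvmv Mvmv.
have QT := qgen_elem_mate (- M v (mate v)) pv dvmv.
apply: (qgen_cancel QT); apply: fixmv; split.
- apply: stab_fixing_mul (qgen_sub_stab QT) fM _ => z fz Mz.
  have umv : ~~ fixed (mate v) by rewrite fixed_mate.
  exact: fixes_col_elem Mz (unfixed_ne umv fz).
- exact: fixes_col_elem Mv (mate_neq v).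
by move=> i; rewrite col_mv subrr mulr0 add0r.
Qed.

Lemma qgen_on_stab_fixing :
  qgen_on (fun M => [/\ stab_fixing M, fixes_col M v & fixes_col M (mate v)]) ->
  qgen_on stab_fixing.
Proof.
move=> fixmv M fM; apply: qgen_on_class_col (stab_fixing_class_col fM).
exact/qgen_on_single_col/qgen_on_fixed_v.
Qed.

End ReducePair.

Lemma exists_qdom_minimal (A : {set 'I_n}) v0 : v0 \in A ->
  exists2 v, v \in A & forall x, x \in A -> qdom x v -> qdom v x.
Proof.
move=> v0A; have [v vA v_min] := arg_minnP (fun v => #|[set x in A | qdom x v]|) v0A.
exists v => // x xA qxv.
have sub : [set y in A | qdom y x] \subset [set y in A | qdom y v].
  by apply/subsetP => y; rewrite !inE => /andP[-> qyx]; apply: qdom_trans qyx qxv.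
have : v \in [set y in A | qdom y x].
  suff -> : [set y in A | qdom y x] = [set y in A | qdom y v].
    by rewrite inE qdom_refl andbT.
  by apply/eqP; rewrite eqEcard sub v_min.
by rewrite inE => /andP[].
Qed.

Definition unfixed_pairs M :=
  [set x | paired x && ~~ (fixes_colb M x && fixes_colb M (mate x))].

Lemma stab_unfixed_pairs0 M : stab M -> unfixed_pairs M = set0 -> M = 1%:M.
Proof.
move=> sM U0; apply/matrixP => i j; rewrite mxE.
case pj: (paired j); last by rewrite (stab_unpaired_col sM (negbT pj)).
have : j \notin unfixed_pairs M by rewrite U0 inE.
by rewrite inE pj negbK => /andP[/fixes_colP].
Qed.

Lemma stab_sub_qgen M : stab M -> qgen M.
Proof.
move: {2}#|unfixed_pairs M|.+1 (ltnSn #|unfixed_pairs M|) => w.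
elim: w M => // w IHw M lt_w sM.
have [U0|[v0 v0U]] := set_0Vmem (unfixed_pairs M).
  by rewrite (stab_unfixed_pairs0 sM U0); apply: gen_one.
have [v vU v_min] := exists_qdom_minimal v0U.
pose fixed z := fixes_colb M z && fixes_colb M (mate z).
have fixed_mate z : fixed (mate z) = fixed z by rewrite /fixed mateK andbC.
have /andP[pv uv] : paired v && ~~ fixed v by move: vU; rewrite inE.
apply: (qgen_on_stab_fixing fixed_mate pv uv) => [x px ux qxv|M' [[sM' fM'] M'v M'mv]|].
- by apply: v_min; rewrite // inE px ux.
- apply: IHw sM'; rewrite (cardsD1 v) vU add1n ltnS in lt_w.
  apply: leq_trans lt_w; apply/subset_leq_card/subsetP => x; rewrite !inE.
  case/andP=> px ux'; rewrite px /=; apply/andP; split.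
    by apply: contraNneq ux' => ->; apply/andP; split; apply/fixes_colP.
  apply: contra ux' => /andP[fx fmx].
  by apply/andP; split; apply/fixes_colP/fM'; rewrite /fixed ?mateK fx fmx.
- by split=> // z /andP[/fixes_colP].
Qed.

End Stabiliser.

Theorem theorem4p4 (g : nat) (adj : rel 'I_(2 * g))
    (adj_irr : forall x, ~~ adj x x) (adj_sym : symmetric adj)
    (star : letter (2 * g) -> letter (2 * g)) (star_bij : bijective star)
    (star_inv : forall u, star (star u) = linv u)
    (a : 'I_g -> letter (2 * g))
    (a_cover : forall x : 'I_(2 * g),
        exists i : 'I_g, bar (a i) = x \/ bar (star (a i)) = x)
    (Q_neq0 : Qform adj a star != 0) :
  forall M : 'M[int]_(2 * g),
    (in_gen (G_gens adj (Qform adj a star)) M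
       /\ act2 M (Qform adj a star) = Qform adj a star)
    <-> in_gen (fun N => std_transvection adj star (Qform adj a star) N
                         \/ Q_inversion star (Qform adj a star) N) M.
Proof.
move=> M; split; first exact: stab_sub_qgen.
exact: qgen_sub_stab.
Qed.
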